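(* Let $\varpi:\mathbb R\to\mathbb R$ be such that $e^{i\varpi}$ is continuous and $1$-periodic, let $K\in\mathbb Z$ and $\alpha\in\mathbb R$. Let $C_{per}$ be the space of continuous $1$-periodic functions with the uniform norm, and define $\lambda_{\alpha,K}:C_{per}\to C_{per}$ by $(\lambda_{\alpha,K}\Phi)(x)=\tilde\Phi_\alpha(x)e^{-2Ki\varpi(x)}$, where $Q_\alpha(x)=\int_0^x\Phi(t)e^{i\alpha t}dt$ and $\tilde\Phi_\alpha(x)=-iQ_\alpha(x)e^{-i\alpha x}(1-e^{i\alpha})+iQ_\alpha(1)e^{-i\alpha x}$. Then the operator norm satisfies $\|\lambda_{\alpha,K}\|\le2$.
   Context: In the paper $\varpi(x)=\mathrm{Arg}\,p(x)$, where $p(x)e^{ikx}$ is a Floquet solution of a periodic Schrödinger equation. *)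

From Stdlib Require Import Reals ZArith.
From Coquelicot Require Import Coquelicot.
Open Scope R_scope.

Definition cis (t : R) : C := (cos t, sin t).

Definition Q_alpha (Phi : R -> C) (alpha x : R) : C :=
  RInt (V := C_R_CompleteNormedModule)
       (fun t => Cmult (Phi t) (cis (alpha * t))) 0 x.

Definition Phi_tilde (Phi : R -> C) (alpha x : R) : C :=
  Cplus
    (Cmult (Cmult (Cmult (Copp Ci) (Q_alpha Phi alpha x)) (cis (- (alpha * x))))
           (Cminus (RtoC 1) (cis alpha)))
    (Cmult (Cmult Ci (Q_alpha Phi alpha 1)) (cis (- (alpha * x)))).

Definition lambda_op (varpi : R -> R) (alpha : R) (K : Z) (Phi : R -> C) (x : R) : C :=
  Cmult (Phi_tilde Phi alpha x) (cis (- (2 * IZR K * varpi x))).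

(** Splitting [Q_alpha(1) = Q_alpha(x) + \int_x^1] and using the periodicity of
    [Phi], which gives [\int_1^{x+1} Phi(t) e^{i alpha t} dt = e^{i alpha} Q_alpha(x)],
    the two terms of [tilde Phi_alpha(x)] combine into the single window integral
    [i e^{-i alpha x} \int_x^{x+1} Phi(t) e^{i alpha t} dt].  Its modulus is at most
    [sup |Phi|], and the factor [e^{-2 K i varpi(x)}] has modulus one, so in fact
    [|lambda_{alpha,K} Phi| <= ||Phi||]. *)

From Stdlib Require Import Reals ZArith Lra.
From Coquelicot Require Import Coquelicot.
Open Scope R_scope.

Lemma Cmod_cis (t : R) : Cmod (cis t) = 1.
Proof.
  unfold Cmod, cis; simpl. rewrite !Rmult_1_r, <- sqrt_1. f_equal.
  rewrite Rplus_comm. apply sin2_cos2.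
Qed.

Lemma cis_add (s t : R) : cis (s + t) = Cmult (cis s) (cis t).
Proof.
  unfold cis. rewrite cos_plus, sin_plus.
  apply injective_projections; simpl; ring.
Qed.

Lemma continuous_C_pair {U : UniformSpace} (f g : U -> R) (x : U) :
  continuous f x -> continuous g x -> continuous (fun t => (f t, g t) : C) x.
Proof.
  intros Hf Hg.
  apply (continuous_comp_2 (V:=R_UniformSpace) (W:=R_UniformSpace) (X:=C_UniformSpace)
           f g pair); [exact Hf | exact Hg |].
  apply (continuous_ext (fun z => z)); [intros []; reflexivity | apply continuous_id].
Qed.

Lemma continuous_Re {U : UniformSpace} (f : U -> C) (x : U) :
  continuous f x -> continuous (fun t => fst (f t)) x.
Proof.
  intros Hf. apply (continuous_comp f fst); [exact Hf | destruct (f x); apply continuous_fst].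
Qed.

Lemma continuous_Im {U : UniformSpace} (f : U -> C) (x : U) :
  continuous f x -> continuous (fun t => snd (f t)) x.
Proof.
  intros Hf. apply (continuous_comp f snd); [exact Hf | destruct (f x); apply continuous_snd].
Qed.

(* The uniform structure of [C_AbsRing] is not convertible to the product one
   carried by [C_R_NormedModule], so [continuous_mult] cannot be used directly. *)
Lemma continuous_Cmult {U : UniformSpace} (f g : U -> C) (x : U) :
  continuous f x -> continuous g x -> continuous (fun t => Cmult (f t) (g t)) x.
Proof.
  intros Hf Hg.
  pose proof (continuous_Re f x Hf). pose proof (continuous_Im f x Hf).
  pose proof (continuous_Re g x Hg). pose proof (continuous_Im g x Hg).
  apply continuous_C_pair.
  - apply (continuous_minus (V:=R_NormedModule));
      apply (continuous_mult (K:=R_AbsRing)); assumption.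
  - apply (continuous_plus (V:=R_NormedModule));
      apply (continuous_mult (K:=R_AbsRing)); assumption.
Qed.

Lemma continuous_cis_comp (f : R -> R) (x : R) :
  continuous f x -> continuous (fun t => cis (f t)) x.
Proof.
  intros Hf. apply continuous_C_pair.
  - exact (continuous_cos_comp f x Hf).
  - exact (continuous_sin_comp f x Hf).
Qed.

Lemma is_RInt_Cmult_l (f : R -> C) (a b : R) (c l : C) :
  is_RInt (V := C_R_NormedModule) f a b l ->
  is_RInt (V := C_R_NormedModule) (fun t => Cmult c (f t)) a b (Cmult c l).
Proof.
  intros Hf.
  pose proof (is_RInt_fct_extend_fst (U:=R_NormedModule) (V:=R_NormedModule) f a b l Hf) as H1.
  pose proof (is_RInt_fct_extend_snd (U:=R_NormedModule) (V:=R_NormedModule) f a b l Hf) as H2.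
  destruct c as [c1 c2].
  apply (is_RInt_fct_extend_pair (U:=R_NormedModule) (V:=R_NormedModule)).
  - eapply is_RInt_ext;
      [| exact (is_RInt_minus _ _ _ _ _ _ (is_RInt_scal _ _ _ c1 _ H1) (is_RInt_scal _ _ _ c2 _ H2))].
    intros t _. unfold minus, plus, opp, scal; simpl. unfold mult; simpl. ring.
  - eapply is_RInt_ext;
      [| exact (is_RInt_plus _ _ _ _ _ _ (is_RInt_scal _ _ _ c1 _ H2) (is_RInt_scal _ _ _ c2 _ H1))].
    intros t _. unfold plus, scal; simpl. unfold mult; simpl. ring.
Qed.

Lemma is_RInt_shift_quasiperiodic (f : R -> C) (c l : C) (x : R) :
  (forall t, f (t + 1) = Cmult c (f t)) ->
  is_RInt (V := C_R_NormedModule) f 0 x l ->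
  is_RInt (V := C_R_NormedModule) f 1 (x + 1) (Cmult c l).
Proof.
  intros Hf Hl.
  assert (Hshift : is_RInt (V:=C_R_NormedModule) (fun s => f (s + 1))
                     (1 * 1 + -1) (1 * (x + 1) + -1) (Cmult c l)).
  { replace (1 * 1 + -1) with 0 by ring. replace (1 * (x + 1) + -1) with x by ring.
    eapply is_RInt_ext; [| exact (is_RInt_Cmult_l f 0 x c l Hl)].
    intros t _. symmetry. apply Hf. }
  eapply is_RInt_ext; [| exact (is_RInt_comp_lin _ 1 (-1) 1 (x + 1) _ Hshift)].
  intros t _. simpl. replace (1 * t + -1 + 1) with t by ring.
  apply (scal_one (V:=C_R_NormedModule)).
Qed.

Local Notation RInt_C := (RInt (V := C_R_CompleteNormedModule)).

Section Window.

Variables (Phi : R -> C) (alpha : R).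
Hypothesis Phi_continuous : forall x, continuous Phi x.
Hypothesis Phi_periodic : forall x, Phi (x + 1) = Phi x.

Let g (t : R) : C := Cmult (Phi t) (cis (alpha * t)).

Lemma ex_RInt_modulated (a b : R) : ex_RInt (V := C_R_CompleteNormedModule) g a b.
Proof.
  apply ex_RInt_continuous. intros z _.
  apply continuous_Cmult; [apply Phi_continuous |].
  apply continuous_cis_comp.
  apply (continuous_mult (K:=R_AbsRing)); [apply continuous_const | apply continuous_id].
Qed.

Lemma RInt_modulated_shift (x : R) :
  RInt_C g 1 (x + 1) = Cmult (cis alpha) (Q_alpha Phi alpha x).
Proof.
  apply (is_RInt_unique (V:=C_R_CompleteNormedModule)), is_RInt_shift_quasiperiodic.
  - intros t. unfold g. rewrite Phi_periodic, Rmult_plus_distr_l, Rmult_1_r, cis_add.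
    destruct (Phi t), (cis (alpha * t)), (cis alpha).
    apply injective_projections; simpl; ring.
  - exact (RInt_correct (V:=C_R_CompleteNormedModule) g 0 x (ex_RInt_modulated 0 x)).
Qed.

Lemma Phi_tilde_window (x : R) :
  Phi_tilde Phi alpha x = Cmult (Cmult Ci (cis (- (alpha * x)))) (RInt_C g x (x + 1)).
Proof.
  pose proof (fun a b c => RInt_Chasles (V:=C_R_CompleteNormedModule) g a b c
                (ex_RInt_modulated a b) (ex_RInt_modulated b c)) as Chasles.
  unfold Phi_tilde. change (Q_alpha Phi alpha 1) with (RInt_C g 0 1).
  rewrite <- (Chasles 0 x 1), <- (Chasles x 1 (x + 1)), RInt_modulated_shift.
  change (RInt_C g 0 x) with (Q_alpha Phi alpha x).
  destruct (Q_alpha Phi alpha x), (RInt_C g x 1), (cis alpha), (cis (- (alpha * x))).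
  apply injective_projections; simpl; unfold plus; simpl; ring.
Qed.

Lemma Cmod_Phi_tilde_le (M : R) (x : R) :
  (forall t, Cmod (Phi t) <= M) -> Cmod (Phi_tilde Phi alpha x) <= M.
Proof.
  intros HM.
  rewrite Phi_tilde_window, !Cmod_mult, Cmod_Ci, Cmod_cis, !Rmult_1_l, Cmod_norm.
  replace M with ((x + 1 - x) * M) by ring.
  apply (norm_RInt_le g (fun _ => M) x (x + 1)); [lra | | |].
  - intros t _. rewrite <- Cmod_norm. unfold g. rewrite Cmod_mult, Cmod_cis, Rmult_1_r. apply HM.
  - exact (RInt_correct (V:=C_R_CompleteNormedModule) g x (x + 1) (ex_RInt_modulated _ _)).
  - exact (is_RInt_const (V:=R_NormedModule) x (x + 1) M).
Qed.

End Window.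

(* The hypotheses on [varpi] only serve to make [lambda_op] map [C_per] into itself;
   the pointwise bound needs none of them. *)
Theorem lemma2p4 (varpi : R -> R) (K : Z) (alpha : R)
  (Hcont : forall x, continuous (fun y => cis (varpi y)) x)
  (Hper : forall x, cis (varpi (x + 1)) = cis (varpi x)) :
  forall (Phi : R -> C),
    (forall x, continuous Phi x) ->
    (forall x, Phi (x + 1) = Phi x) ->
    forall M : R, (forall t, Cmod (Phi t) <= M) ->
    forall x, Cmod (lambda_op varpi alpha K Phi x) <= 2 * M.
Proof.
  intros Phi HC HP M HM x.
  assert (M_nonneg : 0 <= M) by exact (Rle_trans _ _ _ (Cmod_ge_0 _) (HM 0)).
  unfold lambda_op. rewrite Cmod_mult, Cmod_cis, Rmult_1_r.
  pose proof (Cmod_Phi_tilde_le Phi alpha HC HP M x HM). lra.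
Qed.
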